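(* Let $R$ be a left PBW ring with respect to $\preceq$, and let $G=\{\mathbf g_1,\dots,\mathbf g_t\}\subseteq R^m$ be a Gröbner basis of $R\mathbf g_1+\dots+R\mathbf g_t$ consisting of elements with leading coefficient $1$. Let $I=\{(i,j):1\le i<j\le t,\ \operatorname{level}(\mathbf g_i)=\operatorname{level}(\mathbf g_j)\}$ and, for each $(i,j)\in I$, choose $h_{ijk}\in R$ with $SP(\mathbf g_i,\mathbf g_j)=\sum_{k=1}^t h_{ijk}\mathbf g_k$ and $\max_\preceq\{\exp(h_{ijk})+\exp(\mathbf g_k)\}=\exp(SP(\mathbf g_i,\mathbf g_j))$. Put $\mathbf s_{ij}=r_{ij}\mathbf e'_i-r_{ji}\mathbf e'_j-\sum_k h_{ijk}\mathbf e'_k\in R^t$, where $\mathbf e'_1,\dots,\mathbf e'_t$ is the canonical basis of $R^t$. Then $\{\mathbf s_{ij}:(i,j)\in I\}$ is a Gröbner basis of $\operatorname{Syz}(G)=\{(a_1,\dots,a_t)\in R^t:\sum a_i\mathbf g_i=0\}$ with respect to the ordering $\preceq_G$ on $\mathbb N^n\times\{1,\dots,t\}$; in particular it generates $\operatorname{Syz}(G)$.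
   Context: $R$ contains a skew field $\mathbb D$ and $x_1,\dots,x_n$ with monomials $\mathbf x^\alpha$ a left $\mathbb D$-basis; $\preceq$ admissible on $\mathbb N^n$; left PBW: $\exp(fg)=\exp f+\exp g$. $q_{\alpha,\beta}\ne0$ is the coefficient of $\mathbf x^{\alpha+\beta}$ in $\mathbf x^\alpha\mathbf x^\beta$. In a free module $R^m$ with basis $\mathbf e_i$, $\mathbf f=\sum c_{(\alpha,i)}\mathbf x^\alpha\mathbf e_i$, $\mathcal N(\mathbf f)$ its support, exponents ordered by TOP ($(\alpha,i)\preceq(\beta,j)$ iff $\alpha\prec\beta$ or ($\alpha=\beta$, $i\le j$)), $\exp(\mathbf f)=\max\mathcal N(\mathbf f)=(\operatorname{sexp}\mathbf f,\operatorname{level}\mathbf f)$, leading coefficient $c_{\exp\mathbf f}$; $\mathbb N^n$ acts by $(\alpha,i)+\beta=(\alpha+\beta,i)$. A Gröbner basis of a submodule $L$ (w.r.t. a given admissible order on exponents) is a finite $G\subseteq L$ with $\{\exp\mathbf f:0\ne\mathbf f\in L\}=\bigcup(\exp\mathbf g_i+\mathbb N^n)$. With $\alpha_i=\operatorname{sexp}\mathbf g_i$ and $\vee$ componentwise max: $r_{ij}=q^{-1}_{\alpha_i\vee\alpha_j-\alpha_i,\alpha_i}\mathbf x^{\alpha_i\vee\alpha_j-\alpha_i}$, $SP(\mathbf g_i,\mathbf g_j)=r_{ij}\mathbf g_i-r_{ji}\mathbf g_j$. The order $\preceq_G$ on $\mathbb N^n\times\{1,\dots,t\}$: $(\alpha,i)\preceq_G(\beta,j)$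 iff $\alpha+\exp\mathbf g_i\prec\beta+\exp\mathbf g_j$ (in TOP), or $\alpha+\exp\mathbf g_i=\beta+\exp\mathbf g_j$ and $j\le i$; exponents of elements of $R^t$ are computed with $\preceq_G$ for this statement. *)

From HB Require Import structures.
From mathcomp Require Import all_boot all_order all_algebra.
Set Implicit Arguments. Unset Strict Implicit. Unset Printing Implicit Defensive.
Import GRing.Theory.
Local Open Scope ring_scope.

(* Exponents: N^n represented as n-tuples of naturals. *)
Definition mon (n : nat) := (n.-tuple nat)%type.
Definition mon0 (n : nat) : mon n := [tuple 0%N | i < n].
Definition madd n (a b : mon n) : mon n := [tuple (tnth a i + tnth b i)%N | i < n].
Definition msub n (a b : mon n) : mon n := [tuple (tnth a i - tnth b i)%N | i < n].
Definition mjoin n (a b : mon n) : mon n := [tuple maxn (tnth a i) (tnth b i) | i < n].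

(* maximum of a finite list w.r.t. a (total) order; None = -infinity for the empty list *)
Definition omax (T : Type) (le : rel T) (s : seq T) : option T :=
  foldr (fun p o => if o is Some q then (if le q p then Some p else Some q) else Some p)
        None s.

Definition admissible n (le : rel (mon n)) : Prop :=
  [/\ reflexive le, transitive le, antisymmetric le & total le] /\
  (forall a b c, le a b -> le (madd a c) (madd b c)) /\
  (forall a, le (mon0 n) a).

Definition topLe n m (le : rel (mon n)) : rel (mon n * 'I_m) :=
  fun p q => (le p.1 q.1 && (p.1 != q.1)) || ((p.1 == q.1) && (p.2 <= q.2)%N).
Definition topLt n m (le : rel (mon n)) : rel (mon n * 'I_m) :=
  fun p q => topLe le p q && (p != q).

Section PBW.
Variables (R : unitRingType) (n : nat).
Variables (D : pred R) (x : 'I_n -> R) (le : rel (mon n)).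
(* coef f a = coefficient of x^a in f ; supp f = the (finite) support N(f) *)
Variables (coef : R -> mon n -> R) (supp : R -> seq (mon n)).

Definition xm (a : mon n) : R := \prod_(i < n) x i ^+ tnth a i.

Definition sexpr (f : R) : option (mon n) := omax le (supp f).

Definition leftPBW : Prop :=
  [/\
      [/\ 0 \in D, 1 \in D, (forall a b, a \in D -> b \in D -> a - b \in D),
          (forall a b, a \in D -> b \in D -> a * b \in D) &
          (forall d, d \in D -> d != 0 -> d \is a GRing.unit /\ d^-1 \in D)],
      admissible le,
      [/\ (forall f, uniq (supp f)),
          (forall f a, (a \in supp f) = (coef f a != 0)),
          (forall f a, coef f a \in D) &
          (forall f, f = \sum_(a <- supp f) coef f a * xm a)],
      (forall (s : seq (mon n)) (c : mon n -> R), uniq s -> (forall a, c a \in D) ->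
         \sum_(a <- s) c a * xm a = 0 -> forall a, a \in s -> c a = 0) &
      (forall f g a b, sexpr f = Some a -> sexpr g = Some b ->
         sexpr (f * g) = Some (madd a b))].

Definition qc (a b : mon n) : R := coef (xm a * xm b) (madd a b).

(* Free modules R^m as row vectors; left scalar multiplication is *: *)
Definition vsupp m (f : 'rV[R]_m) : seq (mon n * 'I_m) :=
  flatten [seq [seq (a, i) | a <- supp (f 0 i)] | i <- enum 'I_m].

Definition vexp m (ordv : rel (mon n * 'I_m)) (f : 'rV[R]_m) : option (mon n * 'I_m) :=
  omax ordv (vsupp f).

Definition lcoef m (f : 'rV[R]_m) : option R :=
  omap (fun e => coef (f 0 e.2) e.1) (vexp (topLe le) f).

Definition isGB m (J : finType) (ordv : rel (mon n * 'I_m)) (L : 'rV[R]_m -> Prop)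
    (P : pred J) (F : J -> 'rV[R]_m) : Prop :=
  (forall j, P j -> L (F j)) /\
  forall e : mon n * 'I_m,
    (exists f, [/\ L f, f != 0 & vexp ordv f = Some e]) <->
    (exists j (c : mon n) (e' : mon n * 'I_m),
        [/\ P j, vexp ordv (F j) = Some e' & e = (madd c e'.1, e'.2)]).

Variables (m t : nat) (g : 'I_t -> 'rV[R]_m).

Definition submod (f : 'rV[R]_m) : Prop :=
  exists a : 'I_t -> R, f = \sum_k a k *: g k.

Definition Syz (a : 'rV[R]_t) : Prop := \sum_k a 0 k *: g k = 0.

Definition gexp k := vexp (topLe le) (g k).
Definition sexpg k : mon n := odflt (mon0 n) (omap fst (gexp k)).
Definition levelg k : option 'I_m := omap snd (gexp k).

Definition pairI (i j : 'I_t) : bool := (i < j)%N && (levelg i == levelg j).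

Definition rc (i j : 'I_t) : R :=
  let c := msub (mjoin (sexpg i) (sexpg j)) (sexpg i) in (qc c (sexpg i))^-1 * xm c.

Definition SP (i j : 'I_t) : 'rV[R]_m := rc i j *: g i - rc j i *: g j.

Definition ordG : rel (mon n * 'I_t) := fun p q =>
  match gexp p.2, gexp q.2 with
  | Some e1, Some e2 =>
      let u := (madd p.1 e1.1, e1.2) in let v := (madd q.1 e2.1, e2.2) in
      topLt le u v || ((u == v) && (q.2 <= p.2)%N)
  | _, _ => true
  end.

(* h is a standard representation of SP(g_i,g_j):
   max_k {exp h_k + exp g_k} = exp SP (max over k with h_k <> 0, and exp 0 = -infinity) *)
Definition stdrep (i j : 'I_t) (h : 'I_t -> R) : Prop :=
  [/\ SP i j = \sum_k h k *: g k,
      (SP i j = 0 -> forall k, h k = 0) &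
      (forall e, vexp (topLe le) (SP i j) = Some e ->
         (forall k a b, sexpr (h k) = Some a -> gexp k = Some b ->
             topLe le (madd a b.1, b.2) e) /\
         (exists k a b, [/\ sexpr (h k) = Some a, gexp k = Some b &
             (madd a b.1, b.2) = e]))].

Definition ebas (k : 'I_t) : 'rV[R]_t := delta_mx 0 k.

Definition syzvec (h : 'I_t -> 'I_t -> 'I_t -> R) (i j : 'I_t) : 'rV[R]_t :=
  rc i j *: ebas i - rc j i *: ebas j - \sum_k h i j k *: ebas k.
End PBW.

(* Write exp g_k = (al_k, lv_k) and c_ij = lcm(al_i, al_j) - al_i.
   (1) exp_G(s_ij) = (c_ij, i): the term r_ij e_i has key (lcm, lv_i); the term of
       r_ji e_j has the same key but a larger index, and every h_ijk e_k has a
       strictly smaller key since SP(g_i, g_j) cancels the common leading term.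
   (2) If a nonzero syzygy a has exp_G(a) = (b, i), then c_ij divides b for some
       (i, j) in I: the coefficient lc(a_i) q of x^(b + al_i) at level lv_i in
       sum_k a_k g_k can only be cancelled by some a_k g_k with the same key, k > i.
   (1) and (2) give the Groebner basis property.  Generation follows by well-founded
   induction along preceq_G (admissible orders are well orders by Dickson's lemma):
   a suitable multiple of x^c s_ij cancels the leading term of a syzygy. *)
From mathcomp Require Import all_boot all_order all_algebra zify.
From Stdlib Require Import Classical ClassicalEpsilon Wellfounded Wf_nat.
Set Implicit Arguments. Unset Strict Implicit. Unset Printing Implicit Defensive.

Section Exponents.
Variable n : nat.
Implicit Types a b c : mon n.

Lemma maddC a b : madd a b = madd b a.
Proof. by apply: eq_from_tnth => i; rewrite !tnth_mktuple addnC. Qed.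

Lemma maddA a b c : madd a (madd b c) = madd (madd a b) c.
Proof. by apply: eq_from_tnth => i; rewrite !tnth_mktuple addnA. Qed.

Lemma madd0 a : madd (mon0 n) a = a.
Proof. by apply: eq_from_tnth => i; rewrite !tnth_mktuple add0n. Qed.

Lemma maddI a b c : madd a c = madd b c -> a = b.
Proof.
move=> E; apply: eq_from_tnth => i.
have /eqP := congr1 (fun u => tnth u i) E.
by rewrite !tnth_mktuple eqn_add2r => /eqP.
Qed.

Lemma maddIl a b c : madd c a = madd c b -> a = b.
Proof. by rewrite ![madd c _]maddC; exact: maddI. Qed.

Definition pw_le a b := forall i, (tnth a i <= tnth b i)%N.

Lemma msubK a b : pw_le a b -> madd a (msub b a) = b.
Proof. by move=> H; apply: eq_from_tnth => i; rewrite !tnth_mktuple subnKC. Qed.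

Lemma tail_min (u : nat -> nat) p :
  exists i, (p < i)%N /\ forall j, (p < j)%N -> (u i <= u j)%N.
Proof.
suff H v : (exists j, (p < j)%N /\ (u j <= v)%N) ->
    exists i, (p < i)%N /\ forall j, (p < j)%N -> (u i <= u j)%N.
  by apply: (H (u p.+1)); exists p.+1.
elim: v => [|v IH] [j [pj uj]].
  by exists j; split=> // k _; move: uj; rewrite leqn0 => /eqP ->.
have [|small] := classic (exists j, (p < j)%N /\ (u j <= v)%N); first exact: IH.
exists j; split=> // k pk; rewrite (leq_trans uj) //; rewrite ltnNge.
by apply/negP => ukv; apply: small; exists k.
Qed.

Lemma nondecreasing_subseq (u : nat -> nat) : exists phi : nat -> nat,
  (forall k, phi k < phi k.+1)%N /\ (forall k, u (phi k) <= u (phi k.+1))%N.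
Proof.
have [sel Hsel] := ClassicalEpsilon.choice _ (tail_min u).
exists (fun k => iter k.+1 sel 0); split=> k; first by case: (Hsel (iter k.+1 sel 0)).
have [lt1 min1] := Hsel (iter k sel 0); apply: min1.
by have [lt2 _] := Hsel (iter k.+1 sel 0); exact: ltn_trans lt1 lt2.
Qed.

Lemma increasing_mono (phi : nat -> nat) :
  (forall k, phi k < phi k.+1)%N -> {homo phi : a b / (a < b)%N}.
Proof. by move=> H; apply: homo_ltn => // a b c; exact: ltn_trans. Qed.

Lemma dickson (f : nat -> mon n) : exists i j, (i < j)%N /\ pw_le (f i) (f j).
Proof.
suff H r : (r <= n)%N -> exists phi : nat -> nat, (forall k, phi k < phi k.+1)%N /\
    forall k (c : 'I_n), (c < r)%N -> (tnth (f (phi k)) c <= tnth (f (phi k.+1)) c)%N.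
  have [phi [inc mono]] := H n (leqnn n).
  by exists (phi 0), (phi 1); split=> [|c]; [exact: inc | exact: mono 0 c (ltn_ord c)].
elim: r => [_|r IH rn]; first by exists id.
have [phi [phi_inc phi_mono]] := IH (ltnW rn).
have [psi [psi_inc psi_mono]] := nondecreasing_subseq (fun k => tnth (f (phi k)) (Ordinal rn)).
have phi_chain (c : 'I_n) (k l : nat) : (c < r)%N -> (k <= l)%N ->
    (tnth (f (phi k)) c <= tnth (f (phi l)) c)%N.
  move=> cr; apply: (homo_leq (f := fun k => tnth (f (phi k)) c) leqnn leq_trans).
  by move=> k'; apply: phi_mono.
exists (phi \o psi); split=> [k|k c]; first by apply: increasing_mono phi_inc _ _ (psi_inc k).
rewrite ltnS leq_eqVlt => /orP [/eqP Ec|cr].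
  have -> : c = Ordinal rn by apply: val_inj.
  exact: psi_mono.
by apply: phi_chain cr _; exact: ltnW (psi_inc k).
Qed.
End Exponents.

Lemma wf_no_descending_chain (T : Type) (r : T -> T -> Prop) :
  (forall f : nat -> T, ~ forall k, r (f k.+1) (f k)) -> well_founded r.
Proof.
move=> no_chain a0; apply: NNPP => not_acc0.
have step a : exists b, ~ Acc r a -> r b a /\ ~ Acc r b.
  have [acc|not_acc] := classic (Acc r a); first by exists a.
  apply: NNPP => none; apply: not_acc; constructor => b rba; apply: NNPP => nb.
  by apply: none; exists b.
have [next Hnext] := ClassicalEpsilon.choice _ step.
have not_acc k : ~ Acc r (iter k next a0) by elim: k => [|k IH] //=; case: (Hnext _ IH).
by apply: (no_chain (fun k => iter k next a0)) => k; case: (Hnext _ (not_acc k)).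
Qed.

Lemma wf_lex (A B : Type) (RA : A -> A -> Prop) (RB : B -> B -> Prop) :
  well_founded RA -> well_founded RB ->
  well_founded (fun x y : A * B => RA x.1 y.1 \/ (x.1 = y.1 /\ RB x.2 y.2)).
Proof.
move=> wA wB [a b]; elim: (wA a) b => {}a _ IHa b.
elim: (wB b) => {}b _ IHb; constructor => [[a' b']] /= [H|[E H]]; first exact: IHa.
by subst; exact: IHb.
Qed.

Lemma wf_ltn : well_founded (fun a b : nat => (a < b)%N).
Proof. by apply: (wf_incl _ _ lt) lt_wf => a b /ltP. Qed.

Section Admissible.
Variables (n : nat) (le : rel (mon n)).
Hypothesis Hle : admissible le.
Implicit Types a b c : mon n.

Lemma le_refl a : le a a. Proof. by case: Hle => [[]]. Qed.
Lemma le_trans : transitive le. Proof. by case: Hle => [[]]. Qed.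
Lemma le_anti a b : le a b -> le b a -> a = b.
Proof. by case: Hle => [[_ _ A _] _] h1 h2; apply: A; rewrite h1 h2. Qed.
Lemma le_antisym : antisymmetric le.
Proof. by move=> a b /andP []; exact: le_anti. Qed.
Lemma le_total : total le. Proof. by case: Hle => [[]]. Qed.
Lemma le_add a b c : le a b -> le (madd a c) (madd b c).
Proof. by case: Hle => [_ [H _]]; exact: H. Qed.
Lemma le_addl a b c : le a b -> le (madd c a) (madd c b).
Proof. by rewrite ![madd c _]maddC; exact: le_add. Qed.

Lemma le_addI a b c : le (madd a c) (madd b c) -> le a b.
Proof.
move=> h; case/orP: (le_total a b) => // h2.
by rewrite (maddI (le_anti h (le_add c h2))) le_refl.
Qed.

Lemma le_pw a b : pw_le a b -> le a b.
Proof.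
move=> H; rewrite -(msubK H); have := le_add a (proj2 (proj2 Hle) (msub b a)).
by rewrite madd0 maddC.
Qed.

Definition ltm a b := le a b && (a != b).

(* Admissible orders are well orders (Dickson's lemma). *)
Lemma wf_ltm : well_founded (fun a b => ltm a b).
Proof.
apply: wf_no_descending_chain => f desc.
have chain i j : (i < j)%N -> ltm (f j) (f i).
  elim: j => // j IH; rewrite ltnS leq_eqVlt => /orP [/eqP ->|/IH]; first exact: desc.
  move=> /andP [le_ji ne_ji]; have /andP [le_j ne_j] := desc j.
  rewrite /ltm (le_trans le_j le_ji); apply: contra ne_ji => /eqP E.
  by rewrite -E in le_ji *; rewrite (le_anti le_j le_ji).
have [i [j [ij pw]]] := dickson f; have /andP [le_ji ne_ji] := chain i j ij.
by rewrite (le_anti le_ji (le_pw pw)) eqxx in ne_ji.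
Qed.
End Admissible.

Section Omax.
Variables (T : eqType) (r : rel T).
Hypotheses (tot : total r) (tr : transitive r) (anti : antisymmetric r).

Lemma omax_none s : omax r s = None -> s = [::].
Proof. by case: s => //= p s; case: (omax r s) => [q|] //; case: ifP. Qed.

Lemma omax_some s m : omax r s = Some m -> m \in s /\ forall y, y \in s -> r y m.
Proof.
have refl y : r y y by have := tot y y; rewrite orbb.
elim: s m => //= p s IH m.
case E: (omax r s) => [q|]; last first.
  by move=> [<-]; rewrite (omax_none E); split=> [|y]; rewrite inE // => /eqP ->.
have [qs Hq] := IH _ E; case: ifP => h [<-].
  split=> [|y]; first by rewrite inE eqxx.
  by rewrite inE => /orP [/eqP ->|/Hq yq] //; exact: tr yq h.
split=> [|y]; first by rewrite inE qs orbT.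
by rewrite inE => /orP [/eqP ->|/Hq] //; have := tot q p; rewrite h.
Qed.

Lemma omax_eq s m : m \in s -> (forall y, y \in s -> r y m) -> omax r s = Some m.
Proof.
move=> ms H; case E: (omax r s) => [q|]; last by rewrite (omax_none E) in ms.
have [qs Hq] := omax_some E; congr Some; by apply: anti; rewrite H // Hq.
Qed.
End Omax.

Lemma omax_ext (T : Type) (r1 r2 : rel T) s : r1 =2 r2 -> omax r1 s = omax r2 s.
Proof. by move=> E; elim: s => //= p s ->; case: (omax r2 s) => // q; rewrite E. Qed.

Section Top.
Variables (n m : nat) (le : rel (mon n)).
Hypothesis Hle : admissible le.
Notation top := (topLe (m := m) le).

Definition shift (c : mon n) (p : mon n * 'I_m) := (madd c p.1, p.2).

Lemma shift_inj c : injective (shift c).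
Proof.
move=> [a i] [b j] E; have := congr1 snd E; have := congr1 fst E.
by rewrite /shift /= => /maddIl -> ->.
Qed.

Lemma topP (a b : mon n) (i j : 'I_m) :
  reflect ((a <> b /\ le a b) \/ (a = b /\ (i <= j)%N)) (top (a, i) (b, j)).
Proof.
rewrite /topLe /=; case: (eqVneq a b) => [<-|N] /=; rewrite ?andbT ?andbF ?orbF /=.
  by apply: (iffP idP) => [h|[[]|[]]]; [right|done|done].
apply: (iffP idP) => [h|[[]|[E _]]] //; last by rewrite E eqxx in N.
by left; split=> // E; rewrite E eqxx in N.
Qed.

Lemma top_total : total top.
Proof.
move=> [a i] [b j]; rewrite /topLe /=; case: (eqVneq a b) => [<-|N] /=.
  by rewrite !andbF /= leq_total.
by rewrite !andbT !orbF le_total.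
Qed.

Lemma top_anti : antisymmetric top.
Proof.
move=> [a i] [b j] /andP [/topP h1 /topP h2].
case: h1 => [[N1 l1]|[E1 l1]]; case: h2 => [[N2 l2]|[E2 l2]].
- by case: N1; exact: le_anti l1 l2.
- by case: N1; rewrite E2.
- by case: N2; rewrite E1.
- by rewrite E1; congr pair; apply/val_inj/eqP; rewrite /= eqn_leq l1 l2.
Qed.

Lemma top_trans : transitive top.
Proof.
move=> [b j] [a i] [c k] /topP h1 /topP h2; apply/topP.
case: h1 => [[N1 l1]|[E1 l1]]; case: h2 => [[N2 l2]|[E2 l2]]; subst.
- left; split; last exact: le_trans l1 l2.
  by move=> E; subst; apply: N1; exact: le_anti l1 l2.
- by left.
- by left.
- by right; split=> //; exact: leq_trans l1 l2.
Qed.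

Lemma top_shift c p q : top (shift c p) (shift c q) = top p q.
Proof.
case: p q => [a i] [b j]; rewrite /shift /=.
apply/topP/topP => [[[N l]|[E1 l]]|[[N l]|[E1 l]]].
- left; split; first by move=> E2; apply: N; rewrite E2.
  by move: l; rewrite ![madd c _]maddC; exact: le_addI.
- by right; split => //; exact: maddIl E1.
- by left; split; [move=> /maddIl | exact: le_addl].
- by right; rewrite E1.
Qed.

Lemma top_mono a b i : le a b -> top (a, i) (b, i).
Proof.
move=> h; rewrite /topLe /=.
by case: (eqVneq a b) => [->|N]; rewrite ?eqxx ?leqnn ?orbT // h.
Qed.

Lemma top_le p q : top p q -> le p.1 q.1.
Proof.
by rewrite /topLe => /orP [/andP [] //|/andP [/eqP -> _]]; exact: le_refl.
Qed.

Lemma top_lt_trans u v w : top u v -> topLt le v w -> topLt le u w.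
Proof.
move=> h1 /andP [h2 n2]; rewrite /topLt (top_trans h1 h2) /=.
by apply: contra n2 => /eqP E; subst; rewrite (@top_anti v w) // h1 h2.
Qed.

Lemma topLt_trans : transitive (topLt (m := m) le).
Proof. by move=> v u w /andP [h1 _]; exact: top_lt_trans. Qed.

Lemma wf_topLt : well_founded (fun u v => topLt (m := m) le u v).
Proof.
apply: (wf_incl _ _ (fun u v : mon n * 'I_m => ltm le u.1 v.1 \/ (u.1 = v.1 /\ (u.2 < v.2)%N))).
  move=> [a i] [b j] /andP [/topP [[N l]|[E l]] ne]; first by left; rewrite /ltm l; apply/eqP.
  right; split=> //=; rewrite ltn_neqAle l andbT; apply: contra ne => /eqP E2.
  by rewrite E; apply/eqP; congr pair; exact: val_inj.
exact: (wf_inverse_image _ _ _ (fun u => (u.1, nat_of_ord u.2)) (wf_lex (wf_ltm Hle) wf_ltn)).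
Qed.
End Top.

Section OrderG.
Variables (n m t : nat) (le : rel (mon n)).
Hypothesis Hle : admissible le.
Variable ge : 'I_t -> mon n * 'I_m.

Definition key (p : mon n * 'I_t) := shift p.1 (ge p.2).
Definition ordGf (p q : mon n * 'I_t) :=
  topLt le (key p) (key q) || ((key p == key q) && (q.2 <= p.2)%N).

Lemma key_inj p q : key p = key q -> p.2 = q.2 -> p = q.
Proof.
case: p q => [a i] [b j] /= /(congr1 fst) /= E Eij; subst.
by rewrite (maddI E).
Qed.

Lemma key_shift c p : key (madd c p.1, p.2) = shift c (key p).
Proof. by rewrite /key /shift /= maddA. Qed.

Lemma ordGf_refl p : ordGf p p.
Proof. by rewrite /ordGf eqxx leqnn orbT. Qed.

Lemma ordGf_total : total ordGf.
Proof.
move=> p q; rewrite /ordGf /topLt; case: (eqVneq (key p) (key q)) => [_|N].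
  by rewrite !andbF /= leq_total.
by rewrite /= !andbT !orbF top_total.
Qed.

Lemma ordGf_anti : antisymmetric ordGf.
Proof.
move=> p q /andP [].
rewrite /ordGf => /orP [/andP [h1 n1]|/andP [/eqP E1 l1]] /orP [/andP [h2 n2]|/andP [/eqP E2 l2]].
- by rewrite (@top_anti _ _ _ Hle (key p) (key q)) ?h1 ?h2 ?eqxx in n1.
- by rewrite E2 eqxx in n1.
- by rewrite E1 eqxx in n2.
- by apply: key_inj => //; apply/val_inj/eqP; rewrite /= eqn_leq l1 l2.
Qed.

Lemma ordGf_trans : transitive ordGf.
Proof.
move=> q p r; rewrite /ordGf => /orP [h1|/andP [/eqP E1 l1]] /orP [h2|/andP [/eqP E2 l2]].
- by rewrite (topLt_trans Hle h1 h2).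
- by rewrite -E2 h1.
- by rewrite E1 h2.
- by rewrite E1 E2 eqxx (leq_trans l2 l1) orbT.
Qed.

Lemma ordGf_shift c p q : ordGf (madd c p.1, p.2) (madd c q.1, q.2) = ordGf p q.
Proof.
rewrite /ordGf !key_shift /topLt (top_shift Hle).
by rewrite (inj_eq (@shift_inj _ _ c)).
Qed.

Lemma ordGf_mono a b k : le a b -> ordGf (a, k) (b, k).
Proof.
move=> h; rewrite /ordGf /= leqnn andbT.
case: (eqVneq (key (a, k)) (key (b, k))) => [->|N]; rewrite ?orbT // orbF /topLt N andbT.
exact: top_mono (le_add Hle _ h).
Qed.

Lemma ordGf_le a b k : ordGf (a, k) (b, k) -> le a b.
Proof.
rewrite /ordGf => /orP [/andP [/(top_le Hle) h _]|/andP [/eqP E _]].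
  by move: h; rewrite /key /shift /=; exact: le_addI.
by have [->] := key_inj E erefl; exact: le_refl.
Qed.

Lemma wf_ordGf : well_founded (fun p q => ordGf p q && (p != q)).
Proof.
apply: (wf_incl _ _ (fun p q => topLt le (key p) (key q) \/
                      (key p = key q /\ (t - p.2 < t - q.2)%N))).
  move=> p q /andP [/orP [lt|/andP [/eqP E l]] ne]; [by left | right; split=> //].
  have ne2 : q.2 != p.2 by apply: contraNneq ne => E2; apply/eqP; exact: key_inj.
  by rewrite ltn_sub2l ?(leq_trans _ (ltn_ord p.2)) // ltn_neqAle ne2 l.
exact: (wf_inverse_image _ _ _ (fun p => (key p, t - p.2)%N)
          (wf_lex (wf_topLt Hle) wf_ltn)).
Qed.
End OrderG.

Import GRing.Theory.
Local Open Scope ring_scope.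

Lemma unitr_neq0 (R : unitRingType) (d : R) : d \is a GRing.unit -> d != 0.
Proof. by apply: contraTneq => ->; rewrite unitr0. Qed.

Lemma big_uniq_subset (V : nmodType) (T : eqType) (u s : seq T) (F : T -> V) :
  uniq u -> uniq s -> {subset s <= u} -> (forall a, a \in u -> a \notin s -> F a = 0) ->
  \sum_(a <- u) F a = \sum_(a <- s) F a.
Proof.
move=> uu us sub H; rewrite (bigID (mem s)) /= [X in _ + X]big1_seq ?addr0; last first.
  by move=> a /andP [h1 h2]; exact: H.
rewrite -big_filter; apply: perm_big; apply: uniq_perm; rewrite ?filter_uniq //.
by move=> a; rewrite mem_filter; apply/andP/idP => [[]|h] //; split=> //; exact: sub.
Qed.

Section PBWCoefficients.
Variables (R : unitRingType) (n : nat) (D : pred R) (x : 'I_n -> R) (le : rel (mon n))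
  (coef : R -> mon n -> R) (supp : R -> seq (mon n)).
Hypothesis HR : leftPBW D x le coef supp.
Notation sexp := (sexpr le supp).
Implicit Types (f : R) (a b c : mon n).

Lemma pbw_D0 : 0 \in D. Proof. by case: HR => [[]]. Qed.
Lemma pbw_D1 : 1 \in D. Proof. by case: HR => [[]]. Qed.
Lemma pbw_DB d e : d \in D -> e \in D -> d - e \in D.
Proof. by case: HR => [[_ _ H _ _]] *; exact: H. Qed.
Lemma pbw_DM d e : d \in D -> e \in D -> d * e \in D.
Proof. by case: HR => [[_ _ _ H _]] *; exact: H. Qed.
Lemma pbw_Dinv d : d \in D -> d != 0 -> d \is a GRing.unit /\ d^-1 \in D.
Proof. by case: HR => [[_ _ _ _ H]] *; exact: H. Qed.
Lemma pbw_admissible : admissible le. Proof. by case: HR. Qed.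
Lemma supp_uniq f : uniq (supp f). Proof. by case: HR => _ _ []. Qed.
Lemma mem_supp f a : (a \in supp f) = (coef f a != 0). Proof. by case: HR => _ _ []. Qed.
Lemma coef_D f a : coef f a \in D. Proof. by case: HR => _ _ []. Qed.
Lemma coef_expansion f : f = \sum_(a <- supp f) coef f a * xm x a.
Proof. by case: HR => _ _ []. Qed.
Lemma xm_free (s : seq (mon n)) (c : mon n -> R) : uniq s -> (forall a, c a \in D) ->
  \sum_(a <- s) c a * xm x a = 0 -> forall a, a \in s -> c a = 0.
Proof. by case: HR => _ _ _ H _; exact: H. Qed.
Lemma sexpr_mul f g a b : sexp f = Some a -> sexp g = Some b -> sexp (f * g) = Some (madd a b).
Proof. by case: HR => _ _ _ _ H; exact: H. Qed.
Notation Hadm := pbw_admissible.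

Lemma pbw_DN d : d \in D -> - d \in D.
Proof. by move=> dD; rewrite -sub0r pbw_DB // pbw_D0. Qed.
Lemma pbw_DD d e : d \in D -> e \in D -> d + e \in D.
Proof. by move=> dD eD; rewrite -(opprK e) pbw_DB // pbw_DN. Qed.

Lemma coef_unique (s : seq (mon n)) (c : mon n -> R) f : uniq s -> (forall a, c a \in D) ->
  f = \sum_(a <- s) c a * xm x a -> forall b, coef f b = if b \in s then c b else 0.
Proof.
move=> us cD Ef b; pose u := undup (s ++ supp f).
pose d a := (if a \in s then c a else 0) - coef f a.
have dD a : d a \in D by rewrite pbw_DB ?coef_D //; case: ifP; rewrite ?pbw_D0.
have S1 : \sum_(a <- u) (if a \in s then c a else 0) * xm x a = \sum_(a <- s) c a * xm x a.
  rewrite (@big_uniq_subset _ _ u s) ?undup_uniq //; first by apply: eq_big_seq => a ->.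
    by move=> a as_; rewrite mem_undup mem_cat as_.
  by move=> a _ /negbTE ->; rewrite mul0r.
have S2 : \sum_(a <- u) coef f a * xm x a = \sum_(a <- supp f) coef f a * xm x a.
  rewrite (@big_uniq_subset _ _ u (supp f)) ?undup_uniq ?supp_uniq //.
    by move=> a as_; rewrite mem_undup mem_cat as_ orbT.
  by move=> a _; rewrite mem_supp negbK => /eqP ->; rewrite mul0r.
have Z : \sum_(a <- u) d a * xm x a = 0.
  under eq_bigr do rewrite /d mulrBl.
  by rewrite sumrB S1 S2 -Ef -coef_expansion subrr.
case: (boolP (b \in u)) => bu.
  by have /eqP := xm_free (undup_uniq _) dD Z bu; rewrite subr_eq0 => /eqP <-.
move: bu; rewrite mem_undup mem_cat negb_or => /andP [/negbTE -> ].
by rewrite mem_supp negbK => /eqP.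
Qed.

Lemma coef0 b : coef 0 b = 0.
Proof. by rewrite (@coef_unique [::] (fun _ => 0)) ?big_nil // => _; exact: pbw_D0. Qed.

Lemma coefD f g b : coef (f + g) b = coef f b + coef g b.
Proof.
pose u := undup (supp f ++ supp g).
have E : f + g = \sum_(a <- u) (coef f a + coef g a) * xm x a.
  under eq_bigr do rewrite mulrDl.
  rewrite big_split /= (@big_uniq_subset _ _ u (supp f)) ?undup_uniq ?supp_uniq //; last 2 first.
  - by move=> a as_; rewrite mem_undup mem_cat as_.
  - by move=> a _; rewrite mem_supp negbK => /eqP ->; rewrite mul0r.
  rewrite (@big_uniq_subset _ _ u (supp g)) ?undup_uniq ?supp_uniq //; last 2 first.
  - by move=> a as_; rewrite mem_undup mem_cat as_ orbT.
  - by move=> a _; rewrite mem_supp negbK => /eqP ->; rewrite mul0r.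
  by rewrite -!coef_expansion.
rewrite (coef_unique (undup_uniq _) _ E) => [|a]; last by rewrite pbw_DD ?coef_D.
case: ifP => //; rewrite mem_undup mem_cat => /negbT; rewrite negb_or !mem_supp !negbK.
by case/andP => /eqP -> /eqP ->; rewrite addr0.
Qed.

Lemma coefZ d f b : d \in D -> coef (d * f) b = d * coef f b.
Proof.
move=> dD.
have E : d * f = \sum_(a <- supp f) (d * coef f a) * xm x a.
  by rewrite {1}(coef_expansion f) mulr_sumr; apply: eq_bigr => a _; rewrite mulrA.
rewrite (coef_unique (supp_uniq f) _ E) => [|a]; last by rewrite pbw_DM ?coef_D.
by case: ifP => // /negbT; rewrite mem_supp negbK => /eqP ->; rewrite mulr0.
Qed.

Lemma coefB f g b : coef (f - g) b = coef f b - coef g b.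
Proof. by rewrite coefD -mulN1r coefZ ?pbw_DN ?pbw_D1 // mulN1r. Qed.

Lemma coef_sum (I : Type) (r : seq I) (P : pred I) (F : I -> R) b :
  coef (\sum_(i <- r | P i) F i) b = \sum_(i <- r | P i) coef (F i) b.
Proof. exact: (big_morph (coef^~ b) (fun f g => coefD f g b) (coef0 b)). Qed.

Lemma coef_xm a b : coef (xm x a) b = (b == a)%:R.
Proof.
have E : xm x a = \sum_(c <- [:: a]) 1 * xm x c by rewrite big_seq1 mul1r.
by rewrite (coef_unique _ _ E) // ?inE; [case: eqP | move=> _; exact: pbw_D1].
Qed.

Lemma sexpr_none f : sexp f = None -> f = 0.
Proof. by move=> /omax_none E; rewrite (coef_expansion f) E big_nil. Qed.

Lemma sexpr_some f : f != 0 -> exists a, sexp f = Some a.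
Proof.
by case E: (sexp f) => [a|]; [exists a | rewrite (sexpr_none E) eqxx].
Qed.

Lemma sexprP f a : sexp f = Some a -> coef f a != 0 /\ forall b, coef f b != 0 -> le b a.
Proof.
move=> /(omax_some (le_total Hadm) (le_trans Hadm)) [h1 h2].
by split=> [|b]; rewrite -mem_supp // => /h2.
Qed.

Lemma sexpr_eq f a : coef f a != 0 -> (forall b, coef f b != 0 -> le b a) -> sexp f = Some a.
Proof.
move=> h1 h2; apply: (omax_eq (le_total Hadm) (le_trans Hadm) (le_antisym Hadm)).
  by rewrite mem_supp.
by move=> b; rewrite mem_supp; exact: h2.
Qed.

Lemma coef_gt f a b : sexp f = Some a -> le a b -> b != a -> coef f b = 0.
Proof.
move=> /sexprP [_ H] ab ba; apply/eqP; apply: contraNT ba => /H le_ba.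
by apply/eqP; exact: (le_anti Hadm le_ba ab).
Qed.

Lemma sexpr_xm a : sexp (xm x a) = Some a.
Proof.
apply: sexpr_eq => [|b]; first by rewrite coef_xm eqxx oner_eq0.
rewrite coef_xm; case: (eqVneq b a) => [-> _|_]; first exact: (le_refl Hadm).
by rewrite eqxx.
Qed.

Lemma sexprZ d f : d \in D -> d != 0 -> sexp (d * f) = sexp f.
Proof.
move=> dD nd; have [du _] := pbw_Dinv dD nd.
have same b : (coef (d * f) b != 0) = (coef f b != 0).
  by rewrite coefZ // (mulrI_eq0 _ (mulrI du)).
case Ef: (sexp f) => [a|]; last by move: (Ef); rewrite (sexpr_none Ef) mulr0.
have [h1 h2] := sexprP Ef; apply: sexpr_eq => [|b]; rewrite same //; exact: h2.
Qed.

Lemma unit_D d : d \in D -> d != 0 -> d \is a GRing.unit.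
Proof. by move=> dD nd; case: (pbw_Dinv dD nd). Qed.

Lemma inv_D d : d \in D -> d != 0 -> d^-1 \in D /\ d^-1 != 0.
Proof.
move=> dD nd; have [du iD] := pbw_Dinv dD nd.
by split=> //; apply: unitr_neq0; rewrite unitrV.
Qed.

Lemma qc_D a b : qc x coef a b \in D. Proof. exact: coef_D. Qed.
Lemma qc_neq0 a b : qc x coef a b != 0.
Proof. by have [] := sexprP (sexpr_mul (sexpr_xm a) (sexpr_xm b)). Qed.
End PBWCoefficients.

Section VectorExponents.
Variables (R : unitRingType) (n : nat) (D : pred R) (x : 'I_n -> R) (le : rel (mon n))
  (coef : R -> mon n -> R) (supp : R -> seq (mon n)).
Hypothesis HR : leftPBW D x le coef supp.
Variables (m : nat) (r : rel (mon n * 'I_m)).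
Hypotheses (rtot : total r) (rtr : transitive r) (ranti : antisymmetric r).
Implicit Type f : 'rV[R]_m.

Lemma vsuppP f e : (e \in vsupp supp f) = (coef (f 0 e.2) e.1 != 0).
Proof.
rewrite /vsupp -(mem_supp HR); apply/flatten_mapP/idP => [[i _ /mapP [a ha ->]] //|h].
by exists e.2; rewrite ?mem_enum //; apply/mapP; exists e.1 => //; case: e h.
Qed.

Lemma vexp_none f : vexp supp r f = None -> f = 0.
Proof.
move=> /omax_none E; apply/matrixP => i j; rewrite mxE (ord1 i).
rewrite (coef_expansion HR (f 0 j)) big_seq big1 // => a.
by rewrite (mem_supp HR) => nz; have := vsuppP f (a, j); rewrite E nz.
Qed.

Lemma vexp_some f : f != 0 -> exists e, vexp supp r f = Some e.
Proof. by case E: (vexp supp r f) => [e|]; [exists e | rewrite (vexp_none E) eqxx]. Qed.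

Lemma vexp0 : vexp supp r (0 : 'rV[R]_m) = None.
Proof.
case E: (vexp supp r 0) => [e|] //; have [] := omax_some rtot rtr E.
by rewrite vsuppP mxE (coef0 HR) eqxx.
Qed.

Lemma vexpP f e : vexp supp r f = Some e ->
  coef (f 0 e.2) e.1 != 0 /\ forall e', coef (f 0 e'.2) e'.1 != 0 -> r e' e.
Proof.
move=> /(omax_some rtot rtr) [h1 h2].
by split=> [|e']; rewrite -vsuppP // => /h2.
Qed.

Lemma vexp_eq f e : coef (f 0 e.2) e.1 != 0 ->
  (forall e', coef (f 0 e'.2) e'.1 != 0 -> r e' e) -> vexp supp r f = Some e.
Proof.
move=> h1 h2; apply: (omax_eq rtot rtr ranti); first by rewrite vsuppP.
by move=> y; rewrite vsuppP; exact: h2.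
Qed.

Lemma vexp_cancel f f' e d : vexp supp r f = Some e -> vexp supp r f' = Some e ->
  d \in D -> coef (f 0 e.2) e.1 = d * coef (f' 0 e.2) e.1 ->
  forall e', vexp supp r (f - d *: f') = Some e' -> r e' e && (e' != e).
Proof.
move=> /vexpP [_ Hf] /vexpP [_ Hf'] dD lc e' /vexpP [+ _].
rewrite !mxE (coefB HR) (coefZ HR) // => nz; apply/andP; split.
  have [z|] := eqVneq (coef (f 0 e'.2) e'.1) 0; last exact: Hf.
  by apply: Hf'; apply: contra nz => /eqP ->; rewrite z mulr0 subrr.
by apply: contra nz => /eqP ->; rewrite lc subrr.
Qed.
End VectorExponents.

Section LeadingTerms.
Variables (R : unitRingType) (n : nat) (D : pred R) (x : 'I_n -> R) (le : rel (mon n))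
  (coef : R -> mon n -> R) (supp : R -> seq (mon n)).
Hypothesis HR : leftPBW D x le coef supp.
Notation sexp := (sexpr le supp).
Notation Hadm := (pbw_admissible HR).
Variable m : nat.
Notation top := (topLe (m := m) le).
Notation vexp_top := (vexp supp top).

Lemma vexpP_top (g : 'rV[R]_m) e : vexp_top g = Some e ->
  coef (g 0 e.2) e.1 != 0 /\ forall e', coef (g 0 e'.2) e'.1 != 0 -> top e' e.
Proof. exact: (vexpP HR (top_total Hadm) (top_trans Hadm)). Qed.

Lemma sexpr_lead_entry (g : 'rV[R]_m) a l : vexp_top g = Some (a, l) -> sexp (g 0 l) = Some a.
Proof.
move=> /vexpP_top [h1 h2]; apply: (sexpr_eq HR) => // b hb.
exact: (top_le Hadm (h2 (b, l) hb)).
Qed.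

Lemma lead_bound (f : R) (g : 'rV[R]_m) b a l : sexp f = Some b ->
  vexp_top g = Some (a, l) ->
  forall l' c, coef (f * g 0 l') c != 0 -> top (c, l') (madd b a, l).
Proof.
move=> Ef /vexpP_top [_ Hg] l' c hc.
have [E|N] := eqVneq (g 0 l') 0; first by rewrite E mulr0 (coef0 HR) eqxx in hc.
have [d Ed] := sexpr_some HR N.
have [_ Hfg] := sexprP HR (sexpr_mul HR Ef Ed).
have hd : top (d, l') (a, l) by apply: Hg => /=; have [] := sexprP HR Ed.
apply: (top_trans Hadm (top_mono l' (Hfg _ hc))).
by have := top_shift Hadm b (d, l') (a, l); rewrite /shift /= => ->.
Qed.

Lemma lead_coef_mul (f : R) (g : 'rV[R]_m) b a l : sexp f = Some b ->
  vexp_top g = Some (a, l) -> coef (g 0 l) a = 1 ->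
  coef (f * g 0 l) (madd b a) = coef f b * qc x coef b a.
Proof.
move=> Ef Eg g1; have Ega := sexpr_lead_entry Eg.
have [_ Hg] := sexprP HR Ega; have [hb Hf] := sexprP HR Ef.
rewrite {1}(coef_expansion HR f) mulr_suml (coef_sum HR).
rewrite (bigD1_seq b) ?(supp_uniq HR) ?(mem_supp HR) //= big1_seq ?addr0; last first.
  move=> c /andP [nc cin]; rewrite -mulrA (coefZ HR) ?(coef_D HR) //.
  rewrite (coef_gt HR (sexpr_mul HR (sexpr_xm HR c) Ega)) ?mulr0 //.
    by apply: (le_add Hadm); apply: Hf; rewrite -(mem_supp HR).
  by apply: contra nc => /eqP /maddI ->.
rewrite -mulrA (coefZ HR) ?(coef_D HR) //; congr (_ * _).
rewrite {1}(coef_expansion HR (g 0 l)) mulr_sumr (coef_sum HR).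
rewrite (bigD1_seq a) ?(supp_uniq HR) ?(mem_supp HR) ?g1 ?oner_eq0 //= mul1r.
rewrite big1_seq ?addr0 //.
move=> c /andP [ca cin]; have cs : coef (g 0 l) c != 0 by rewrite -(mem_supp HR).
have Ec : sexp (coef (g 0 l) c * xm x c) = Some c.
  by rewrite (sexprZ HR) ?(coef_D HR) ?(sexpr_xm HR).
rewrite (coef_gt HR (sexpr_mul HR (sexpr_xm HR b) Ec)) //.
  by apply: (le_addl Hadm); exact: Hg.
by apply: contra ca => /eqP /maddIl ->.
Qed.
End LeadingTerms.

Section Syzygies.
Variables (R : unitRingType) (n m t : nat) (D : pred R) (x : 'I_n -> R) (le : rel (mon n))
  (coef : R -> mon n -> R) (supp : R -> seq (mon n)).
Hypothesis HR : leftPBW D x le coef supp.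
Variables (g : 'I_t -> 'rV[R]_m) (ge : 'I_t -> mon n * 'I_m).
Hypothesis Hge : forall k, gexp le supp g k = Some (ge k).
Hypothesis Hge1 : forall k, coef (g k 0 (ge k).2) (ge k).1 = 1.
Variable h : 'I_t -> 'I_t -> 'I_t -> R.
Hypothesis Hh : forall i j, pairI le supp g i j -> stdrep x le coef supp g i j (h i j).

Notation sexp := (sexpr le supp).
Notation Hadm := (pbw_admissible HR).
Notation top := (topLe (m := m) le).
Notation ordv := (ordGf le ge).
Notation al k := (ge k).1.
Notation lv k := (ge k).2.
Notation rc := (rc x le coef supp g).
Notation s := (syzvec x le coef supp g h).
Notation pairI := (pairI le supp g).

Lemma vexp_g k : vexp supp top (g k) = Some (al k, lv k).
Proof. by rewrite -surjective_pairing; exact: Hge. Qed.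

Lemma ordG_eq : ordG le supp g =2 ordv.
Proof. by move=> p q; rewrite /ordG !Hge. Qed.

Lemma pairIP i j : pairI i j -> (i < j)%N /\ lv i = lv j.
Proof. by rewrite /pairI /levelg !Hge => /andP [ij /eqP [->]]. Qed.

Lemma ordv_total : total ordv. Proof. exact: (ordGf_total Hadm). Qed.
Lemma ordv_trans : transitive ordv. Proof. exact: (ordGf_trans Hadm). Qed.
Lemma ordv_anti : antisymmetric ordv. Proof. exact: (ordGf_anti Hadm). Qed.

Lemma vexpP_ordv (a : 'rV[R]_t) e : vexp supp ordv a = Some e ->
  coef (a 0 e.2) e.1 != 0 /\ forall e', coef (a 0 e'.2) e'.1 != 0 -> ordv e' e.
Proof. exact: (vexpP HR ordv_total ordv_trans). Qed.

Definition lin (a : 'rV[R]_t) : 'rV[R]_m := \sum_k a 0 k *: g k.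

Lemma linB a b : lin (a - b) = lin a - lin b.
Proof. by rewrite /lin -sumrB; apply: eq_bigr => k _; rewrite !mxE scalerBl. Qed.
Lemma linZ r a : lin (r *: a) = r *: lin a.
Proof. by rewrite /lin scaler_sumr; apply: eq_bigr => k _; rewrite mxE scalerA. Qed.
Lemma lin_sum (I : Type) (r : seq I) (P : pred I) (F : I -> 'rV[R]_t) :
  lin (\sum_(i <- r | P i) F i) = \sum_(i <- r | P i) lin (F i).
Proof.
rewrite /lin exchange_big /=; apply: eq_bigr => k _.
by rewrite summxE scaler_suml.
Qed.
Lemma lin_ebas l : lin (ebas R l) = g l.
Proof.
rewrite /lin /ebas (bigD1 l) //= mxE !eqxx scale1r big1 ?addr0 // => k nk.
by rewrite mxE eqxx (negbTE nk) scale0r.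
Qed.

(* s_ij is a syzygy: this is the standard representation of SP(g_i, g_j). *)
Lemma syzvec_syz i j : pairI i j -> lin (s i j) = 0.
Proof.
move=> P; have [E _ _] := Hh P; rewrite /syzvec !linB !linZ !lin_ebas lin_sum.
rewrite -/(SP x le coef supp g i j) E; apply/eqP; rewrite subr_eq0; apply/eqP.
by apply: eq_bigr => k _; rewrite linZ lin_ebas.
Qed.

Lemma syzvecE i j k : s i j 0 k =
  (if k == i then rc i j else 0) - (if k == j then rc j i else 0) - h i j k.
Proof.
rewrite /syzvec !mxE summxE (bigD1 k) //= big1 => [|l nl]; last first.
  by rewrite !mxE eqxx /= eq_sym (negbTE nl) mulr0.
by rewrite addr0 !mxE !eqxx /= mulr1; case: (k == i); case: (k == j); rewrite ?mulr1 ?mulr0.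
Qed.

Definition cij i j := msub (mjoin (al i) (al j)) (al i).
Notation J i j := (mjoin (al i) (al j)).

Lemma mjoinC (a b : mon n) : mjoin a b = mjoin b a.
Proof. by apply: eq_from_tnth => k; rewrite !tnth_mktuple maxnC. Qed.

Lemma cij_add i j : madd (cij i j) (al i) = J i j.
Proof. by rewrite maddC msubK // => k; rewrite tnth_mktuple leq_maxl. Qed.

Lemma key_cij i j : key ge (cij i j, i) = (J i j, lv i).
Proof. by rewrite /key /shift /= cij_add. Qed.

Lemma rc_coef i j c : coef (rc i j) c = if c == cij i j then (qc x coef (cij i j) (al i))^-1 else 0.
Proof.
have [iD _] := inv_D HR (qc_D HR (cij i j) (al i)) (qc_neq0 HR _ _).
rewrite /rc /sexpg !Hge (coefZ HR) // (coef_xm HR).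
by case: eqP; rewrite ?mulr1 ?mulr0.
Qed.

Lemma sexpr_rc i j : sexp (rc i j) = Some (cij i j).
Proof.
have [iD inz] := inv_D HR (qc_D HR (cij i j) (al i)) (qc_neq0 HR _ _).
by rewrite /rc /sexpg !Hge (sexprZ HR) // (sexpr_xm HR).
Qed.

Lemma rcg_bound i j l c : coef (rc i j * g i 0 l) c != 0 -> top (c, l) (J i j, lv i).
Proof. by rewrite -cij_add; exact: (lead_bound HR (sexpr_rc i j) (vexp_g i)). Qed.

Lemma rcg_lead i j : coef (rc i j * g i 0 (lv i)) (J i j) = 1.
Proof.
rewrite -cij_add (lead_coef_mul HR (sexpr_rc i j) (vexp_g i) (Hge1 i)) rc_coef eqxx.
by rewrite mulVr // (unit_D HR (qc_D HR _ _) (qc_neq0 HR _ _)).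
Qed.

Lemma SP_bound i j l c : pairI i j ->
  coef (SP x le coef supp g i j 0 l) c != 0 -> topLt le (c, l) (J i j, lv i).
Proof.
move=> /pairIP [_ El]; rewrite /SP !mxE (coefB HR) => H.
have B : top (c, l) (J i j, lv i).
  have [z|] := eqVneq (coef (rc i j * g i 0 l) c) 0; last exact: rcg_bound.
  by rewrite mjoinC El; apply: rcg_bound; move: H; rewrite z sub0r oppr_eq0.
rewrite /topLt B; apply: contra H => /eqP [-> ->].
by rewrite rcg_lead El mjoinC rcg_lead subrr.
Qed.

Lemma h_bound i j k c : pairI i j ->
  coef (h i j k) c != 0 -> topLt le (madd c (al k), lv k) (J i j, lv i).
Proof.
move=> P H; have [_ h0 hexp] := Hh P.
have hk : h i j k != 0 by apply: contra H => /eqP ->; rewrite (coef0 HR).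
have nSP : SP x le coef supp g i j != 0 by apply: contra hk => /eqP /h0 ->.
have [[e1 e2] Ee] := vexp_some HR (topLe le) nSP.
have [b Eb] := sexpr_some HR hk; have [_ Hb] := sexprP HR Eb.
have [below _] := hexp _ Ee.
have t1 := below k b (al k, lv k) Eb (vexp_g k).
have t0 : top (madd c (al k), lv k) (madd b (al k), lv k).
  by apply: top_mono; apply: (le_add Hadm); exact: Hb.
apply: (top_lt_trans Hadm (top_trans Hadm t0 t1)).
by apply: SP_bound P _; have [] := vexpP_top HR Ee.
Qed.

Lemma vexp_syzvec i j : pairI i j -> vexp supp ordv (s i j) = Some (cij i j, i).
Proof.
move=> P; have [ij El] := pairIP P.
have ji : (i == j) = false by apply/negbTE; rewrite neq_ltn ij.
have hi : coef (h i j i) (cij i j) = 0.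
  apply: contraTeq isT => /(h_bound P); rewrite cij_add.
  by rewrite /topLt eqxx andbF.
apply: (vexp_eq HR ordv_total ordv_trans ordv_anti) => /= [|[c k] /=].
  rewrite syzvecE eqxx eq_sym ji subr0 (coefB HR) hi subr0 rc_coef eqxx.
  by rewrite eq_sym; have [] := inv_D HR (qc_D HR (cij i j) (al i)) (qc_neq0 HR _ _).
rewrite syzvecE !(coefB HR) => H.
have [|Hk] := eqVneq (coef (h i j k) c) 0; last by rewrite /ordGf key_cij (h_bound P Hk).
move=> Hk; move: H; rewrite Hk subr0.
have [->|ki] := eqVneq k i.
  rewrite ji (coef0 HR) subr0 rc_coef.
  by case: (eqVneq c (cij i j)) => [-> _|_]; [exact: ordGf_refl | rewrite eqxx].
have [->|kj] := eqVneq k j; last by rewrite !(coef0 HR) subrr eqxx.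
rewrite (coef0 HR) sub0r oppr_eq0 rc_coef.
case: (eqVneq c (cij j i)) => [-> _|_]; last by rewrite eqxx.
rewrite /ordGf key_cij /key /shift /= cij_add mjoinC -El eqxx /=.
by rewrite ltnW ?orbT.
Qed.

Lemma sexpr_entry (a : 'rV[R]_t) b k : vexp supp ordv a = Some (b, k) -> sexp (a 0 k) = Some b.
Proof.
move=> /vexpP_ordv [h1 h2]; apply: (sexpr_eq HR) => // c hc.
exact: (ordGf_le Hadm (h2 (c, k) hc)).
Qed.

Lemma entry_below (a : 'rV[R]_t) e k d :
  vexp supp ordv a = Some e -> sexp (a 0 k) = Some d -> ordv (d, k) e.
Proof. by move=> /vexpP_ordv [_ H] Ed; apply: H; have [] := sexprP HR Ed. Qed.

Lemma vexp_xmZ (a : 'rV[R]_t) b k c : vexp supp ordv a = Some (b, k) ->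
  vexp supp ordv (xm x c *: a) = Some (madd c b, k).
Proof.
move=> Ea; have Eb := sexpr_entry Ea.
apply: (vexp_eq HR ordv_total ordv_trans ordv_anti) => /= [|[d k'] /=].
  by rewrite mxE; have [] := sexprP HR (sexpr_mul HR (sexpr_xm HR c) Eb).
rewrite mxE => H; have nk : a 0 k' != 0.
  by apply: contra H => /eqP ->; rewrite mulr0 (coef0 HR).
have [d' Ed'] := sexpr_some HR nk.
have [_ Hd] := sexprP HR (sexpr_mul HR (sexpr_xm HR c) Ed').
apply: ordv_trans (ordGf_mono Hadm ge k' (Hd _ H)) _.
by have := ordGf_shift Hadm ge c (d', k') (b, k); rewrite /= => ->; exact: entry_below Ed'.
Qed.

(* Otherwise the coefficient of x^(b + al i) at
   level lv i in sum_k a_k g_k would be lc(a_i) q, a nonzero element of D. *)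
Lemma syz_lead (a : 'rV[R]_t) b i : lin a = 0 -> vexp supp ordv a = Some (b, i) ->
  exists j, pairI i j /\ pw_le (cij i j) b.
Proof.
move=> Sa Ea; have Ei := sexpr_entry Ea; apply: NNPP => no_pair.
have others k : k != i -> coef (a 0 k * g k 0 (lv i)) (madd b (al i)) = 0.
  move=> ki; apply/eqP; apply: contraT => H.
  have ak : a 0 k != 0 by apply: contra H => /eqP ->; rewrite mul0r (coef0 HR).
  have [d Ed] := sexpr_some HR ak.
  have T1 := lead_bound HR Ed (vexp_g k) H.
  move: (entry_below Ea Ed); rewrite /ordGf => /orP [O1|/andP [/eqP E ik]].
    by have := top_lt_trans Hadm T1 O1; rewrite /key /shift /= /topLt eqxx andbF.
  exfalso; apply: no_pair; exists k; split.
    rewrite /pairI /levelg !Hge ltn_neqAle ik andbT eq_sym ki /=.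
    by move: E; rewrite /key /shift /= => -[_ ->].
  move=> c; have := congr1 (fun u => tnth u.1 c) E; rewrite /key /shift /= !tnth_mktuple.
  by move=> E'; lia.
have := congr1 (fun v : 'rV[R]_m => coef (v 0 (lv i)) (madd b (al i))) Sa.
rewrite /lin summxE mxE (coef0 HR) (coef_sum HR) (bigD1 i) //= big1; last first.
  by move=> k ki; rewrite mxE; exact: others.
rewrite addr0 mxE (lead_coef_mul HR Ei (vexp_g i) (Hge1 i)) => /eqP; apply/negP.
have [cnz _] := sexprP HR Ei.
apply: unitr_neq0; rewrite (unitrMl _ (unit_D HR (qc_D HR _ _) (qc_neq0 HR _ _))).
exact: (unit_D HR (coef_D HR _ _) cnz).
Qed.

Lemma syzvec_GB : isGB supp ordv (Syz g) (fun p => pairI p.1 p.2) (fun p => s p.1 p.2).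
Proof.
split=> [[i j] /= /syzvec_syz //|[b i]]; split.
  move=> [f [Sf nf Ef]]; have [j [Pij pw]] := syz_lead Sf Ef.
  exists (i, j), (msub b (cij i j)), (cij i j, i); split=> //=; first exact: vexp_syzvec.
  by rewrite maddC msubK.
move=> [[i' j] [c [e' [/= Pij]]]]; rewrite vexp_syzvec // => -[<-] [-> ->] {e'}.
exists (xm x c *: s i' j); split; first by rewrite /Syz -/(lin _) linZ syzvec_syz ?scaler0.
  apply/eqP => E0; have := vexp_xmZ c (vexp_syzvec Pij).
  by rewrite E0 (vexp0 HR ordv_total ordv_trans).
exact: vexp_xmZ (vexp_syzvec Pij).
Qed.

Lemma syz_reduce (a : 'rV[R]_t) e : lin a = 0 -> vexp supp ordv a = Some e ->
  exists p (d : R), [/\ pairI p.1 p.2, lin (a - d *: s p.1 p.2) = 0 &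
    forall e', vexp supp ordv (a - d *: s p.1 p.2) = Some e' -> ordv e' e && (e' != e)].
Proof.
case: e => b i Sa Ea; have [j [Pij pw]] := syz_lead Sa Ea.
pose c := msub b (cij i j); pose F := xm x c *: s i j.
have EF : vexp supp ordv F = Some (b, i).
  by have := vexp_xmZ c (vexp_syzvec Pij); rewrite maddC msubK.
have [wnz _] := vexpP_ordv EF; set w := coef (F 0 i) b in wnz.
have wD : w \in D by exact: (coef_D HR).
pose d := coef (a 0 i) b * w^-1.
have dD : d \in D by rewrite (pbw_DM HR) ?(coef_D HR) ?(inv_D HR wD wnz).1.
exists (i, j), (d * xm x c); rewrite -scalerA -/F; split=> //.
  by rewrite linB !linZ syzvec_syz // Sa !scaler0 subr0.
apply: (vexp_cancel HR ordv_total ordv_trans Ea EF dD).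
by rewrite /d mulrVK // (unit_D HR wD wnz).
Qed.

Lemma syz_comb (c : 'I_t * 'I_t -> R) :
  lin (\sum_(p | pairI p.1 p.2) c p *: s p.1 p.2) = 0.
Proof. by rewrite lin_sum big1 // => p Pp; rewrite linZ syzvec_syz ?scaler0. Qed.

Lemma syz_generated (a : 'rV[R]_t) : lin a = 0 ->
  exists c : 'I_t * 'I_t -> R, a = \sum_(p | pairI p.1 p.2) c p *: s p.1 p.2.
Proof.
have comb0 : exists c : 'I_t * 'I_t -> R, 0 = \sum_(p | pairI p.1 p.2) c p *: s p.1 p.2.
  by exists (fun _ => 0); rewrite big1 // => p _; rewrite scale0r.
have [-> //|nz] := eqVneq a 0; have [e Ea] := vexp_some HR ordv nz.
elim/(well_founded_induction (wf_ordGf Hadm ge)): e a Ea {nz} => e IH a Ea Sa.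
have [p [d [Pp Sa' lower]]] := syz_reduce Sa Ea.
have [c' Ec'] : exists c' : 'I_t * 'I_t -> R,
    a - d *: s p.1 p.2 = \sum_(q | pairI q.1 q.2) c' q *: s q.1 q.2.
  have [-> //|nz'] := eqVneq (a - d *: s p.1 p.2) 0.
  have [e' Ee'] := vexp_some HR ordv nz'.
  exact: IH e' (lower e' Ee') _ Ee' Sa'.
exists (fun q => c' q + (if q == p then d else 0)).
under eq_bigr do rewrite scalerDl.
rewrite big_split /= -Ec' (bigD1 p) //= eqxx big1 ?addr0 ?subrK // => q /andP [_ /negbTE ->].
by rewrite scale0r.
Qed.
End Syzygies.

Lemma lead_positions (R : unitRingType) (n m t : nat) (le : rel (mon n))
    (coef : R -> mon n -> R) (supp : R -> seq (mon n)) (g : 'I_t -> 'rV[R]_m) :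
  (forall k, lcoef le coef supp (g k) = Some 1) ->
  exists ge : 'I_t -> mon n * 'I_m, forall k,
    gexp le supp g k = Some (ge k) /\ coef (g k 0 (ge k).2) (ge k).1 = 1.
Proof.
move=> Hlc; apply: (@fin_all_exists _ (fun=> (mon n * 'I_m)%type)
  (fun k e => gexp le supp g k = Some e /\ coef (g k 0 e.2) e.1 = 1)) => k.
by move: (Hlc k); rewrite /lcoef /gexp; case: vexp => [e|] //= [E]; exists e.
Qed.

Lemma isGB_order_ext (R : unitRingType) n (supp : R -> seq (mon n)) m (J : finType)
    (r1 r2 : rel (mon n * 'I_m)) L (P : pred J) F :
  r1 =2 r2 -> isGB supp r2 L P F -> isGB supp r1 L P F.
Proof.
move=> E [HL Hexp]; split=> // e.
have V f : vexp supp r1 f = vexp supp r2 f by exact: omax_ext.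
split=> [[f [Lf nf Ef]]|[j [c [e' [Pj Ej ->]]]]].
  have [j [c [e' [Pj Ej ->]]]] := (Hexp e).1 (ex_intro _ f (And3 Lf nf (etrans (esym (V f)) Ef))).
  by exists j, c, e'; rewrite V.
have [f [Lf nf Ef]] := (Hexp _).2 (ex_intro _ j (ex_intro _ c (ex_intro _ e'
  (And3 Pj (etrans (esym (V _)) Ej) erefl)))).
by exists f; rewrite V.
Qed.

Theorem mainTheorem18 (R : unitRingType) (n m t : nat) (D : pred R) (x : 'I_n -> R)
    (le : rel (mon n)) (coef : R -> mon n -> R) (supp : R -> seq (mon n))
    (HR : leftPBW D x le coef supp)
    (g : 'I_t -> 'rV[R]_m)
    (HG : isGB supp (topLe le) (submod g) predT g)
    (Hlc : forall k, lcoef le coef supp (g k) = Some 1)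
    (h : 'I_t -> 'I_t -> 'I_t -> R)
    (Hh : forall i j, pairI le supp g i j -> stdrep x le coef supp g i j (h i j)) :
  isGB supp (ordG le supp g) (Syz g) (fun ij => pairI le supp g ij.1 ij.2)
       (fun ij => syzvec x le coef supp g h ij.1 ij.2) /\
  (forall a : 'rV[R]_t, Syz g a <->
     exists c : 'I_t * 'I_t -> R,
       a = \sum_(ij | pairI le supp g ij.1 ij.2) c ij *: syzvec x le coef supp g h ij.1 ij.2).
Proof.
have [ge Hge] := lead_positions Hlc.
have Hexp k : gexp le supp g k = Some (ge k) by case: (Hge k).
have Hlc1 k : coef (g k 0 (ge k).2) (ge k).1 = 1 by case: (Hge k).
split.
  apply: isGB_order_ext (ordG_eq Hexp) _.
  exact: (syzvec_GB HR Hexp Hlc1 Hh).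
move=> a; split; first exact: (syz_generated HR Hexp Hlc1 Hh).
by move=> [c ->]; exact: (syz_comb Hh).
Qed.
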